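(* Let $S$ be a semibounded relation in $\mathfrak H$ with lower bound $\gamma\in\mathbb R$, $c\le\gamma$, $Q_c$ a representing map for $\mathfrak t(S)-c$ with companion relation $J_c$, and let $H$ be a semibounded selfadjoint extension of $S$ which is bounded below by $c$. Then: (a) for $\{h,h'\}\in S$ and $\{f,f'\}\in H$ with $f\in\mathrm{dom}\,J_c^*$, $$(\mathfrak t(H)-c)[f-h,f-h]-\|(J_c^* )_{\rm reg}f-Q_ch\|^2=(\mathfrak t(H)-c)[f,f]-\|(J_c^* )_{\rm reg}f\|^2;$$ (b) for all $\{f,f'\}\in H$ and $\{h,h'\}\in S$ one has $f\in\mathrm{dom}\,J_c^*$ and $(\mathfrak t(H)-c)[f-h,f-h]\ge\|(J_c^* )_{\rm reg}f-Q_ch\|^2$; (c) if $\mathfrak t_H\subset\mathfrak t_{S_{{\rm K},c}}$, then equality holds in (b) for all $\{f,f'\}\in H$, $\{h,h'\}\in S$.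
   Context: Linear relations are linear subspaces of $\mathfrak H\times\mathfrak K$; $T^*$ adjoint, $T^{**}$ closure; products $RT$; $c+T=\{\{f,g+cf\}:\{f,g\}\in T\}$; for closed $T$, $T_{\rm reg}=\{\{f,(I-\pi)g\}:\{f,g\}\in T\}$ with $\pi$ the projection onto $\mathrm{mul}\,T$. $S$ semibounded with lower bound $\gamma$: $\gamma$ is the supremum of $c$ with $(\varphi',\varphi)\ge c\|\varphi\|^2$ on $S$. For a semibounded relation $T$, $\mathfrak t(T)[\varphi,\psi]=(\varphi',\psi)$ for $\{\varphi,\varphi'\},\{\psi,\psi'\}\in T$. A representing map for $\mathfrak t(S)-c$ is a linear operator $Q_c$ into a Hilbert space with $\mathrm{dom}\,Q_c=\mathrm{dom}\,S$ and $\mathfrak t(S)[\varphi,\psi]=c(\varphi,\psi)+(Q_c\varphi,Q_c\psi)$; companion relation $J_c=\{\{Q_c\varphi,\varphi'-c\varphi\}:\{\varphi,\varphi'\}\in S\}$; Kreĭn type extension $S_{{\rm K},c}=c+J_c^{**}J_c^*$. For semibounded selfadjoint $H$, $\mathfrak t_H$ is its associated closed form (closure of $\mathfrak t(H)$); $\mathfrak t_1\subset\mathfrak t_2$ means extension. ''Bounded below by $c$'' means $(f',f)\ge c\|f\|^2$ for $\{f,f'\}\in H$. *)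

From mathcomp Require Import all_boot all_order all_algebra.
From mathcomp Require Import all_classical all_reals.
From mathcomp Require Export complex.
Set Implicit Arguments. Unset Strict Implicit. Unset Printing Implicit Defensive.
Import Order.TTheory GRing.Theory Num.Theory.
Local Open Scope ring_scope.

Definition rC (R : realType) (x : R) : R[i] := (x%:C)%C.

Record hilbert (R : realType) := Hilbert {
  hsort :> lmodType R[i];
  hinner : hsort -> hsort -> R[i];
  hinner_linear : forall (a : R[i]) (x y z : hsort),
      hinner (a *: x + y) z = a * hinner x z + hinner y z;
  hinner_conj : forall x y : hsort, hinner y x = Num.conj (hinner x y);
  hinner_ge0 : forall x : hsort, 0 <= hinner x x;
  hinner_eq0 : forall x : hsort, hinner x x = 0 -> x = 0;
  hcomplete : forall u : nat -> hsort,
      (forall e : R, 0 < e -> exists N : nat, forall m n : nat, (N <= m)%N -> (N <= n)%N ->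
          Num.sqrt (complex.Re (hinner (u m - u n) (u m - u n))) < e) ->
      exists l : hsort, forall e : R, 0 < e -> exists N : nat, forall n : nat, (N <= n)%N ->
          Num.sqrt (complex.Re (hinner (u n - l) (u n - l))) < e
}.

Section LinearRelations.
Variable R : realType.
Implicit Types H K G : hilbert R.

Definition inner {H} (x y : H) : R[i] := hinner x y.
Definition hnorm {H} (x : H) : R := Num.sqrt (complex.Re (inner x x)).

Definition lrel H K := H -> K -> Prop.

Definition linrel {H K} (T : lrel H K) : Prop :=
  T 0 0 /\ forall (a : R[i]) f f' g g', T f f' -> T g g' -> T (a *: f + g) (a *: f' + g').

Definition rdom {H K} (T : lrel H K) : set H := fun f => exists g, T f g.
Definition rmul {H K} (T : lrel H K) : set K := fun g => T 0 g.

Definition rsub {H K} (T1 T2 : lrel H K) : Prop := forall f g, T1 f g -> T2 f g.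

Definition adjoint {H K} (T : lrel H K) : lrel K H :=
  fun g g' => forall f f', T f f' -> inner f' g = inner f g'.

Definition rclosure {H K} (T : lrel H K) : lrel H K := adjoint (adjoint T).

Definition rprod {H K G} (S : lrel K G) (T : lrel H K) : lrel H G :=
  fun f h => exists g, T f g /\ S g h.

Definition rshift {H} (c : R) (T : lrel H H) : lrel H H :=
  fun f g => exists g0, T f g0 /\ g = g0 + rC c *: f.

(* orthogonal projection onto a (closed) subspace M: the y in M with x - y
   orthogonal to M (chosen by description; it exists uniquely when M is a
   closed linear subspace of a Hilbert space) *)
Definition oproj {H} (M : set H) (x : H) : H :=
  xget 0 [set y | M y /\ forall m, M m -> inner (x - y) m = 0].

Definition rreg {H K} (T : lrel H K) : lrel H K :=
  fun f g => exists g1, T f g1 /\ g = g1 - oproj (rmul T) g1.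

(* the value T f of a relation which is an operator (e.g. T_reg) *)
Definition opval {H K} (T : lrel H K) (f : H) : K := xget 0 [set g | T f g].

Definition selfadjoint {H} (T : lrel H H) : Prop := forall f g, T f g <-> adjoint T f g.

Definition bounded_below_by {H} (T : lrel H H) (c : R) : Prop :=
  forall f f', T f f' -> rC (c * hnorm f ^+ 2) <= inner f' f.

Definition semibounded {H} (T : lrel H H) : Prop := exists c, bounded_below_by T c.

Definition lower_bound {H} (T : lrel H H) (gamma : R) : Prop :=
  (forall c, bounded_below_by T c -> c <= gamma) /\
  (forall u, (forall c, bounded_below_by T c -> c <= u) -> gamma <= u).

Definition tform {H} (T : lrel H H) (phi psi : H) : R[i] :=
  inner (opval T phi) psi.

Definition tform_shift {H} (T : lrel H H) (c : R) (phi psi : H) : R[i] :=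
  tform T phi psi - rC c * inner phi psi.

(* Q is a representing map for t(S) - c (Q a linear operator with domain
   dom S into the Hilbert space G; its values off dom S are irrelevant) *)
Definition representing_map {H G} (S : lrel H H) (c : R) (Q : H -> G) : Prop :=
  (forall (a : R[i]) phi psi, rdom S phi -> rdom S psi -> Q (a *: phi + psi) = a *: Q phi + Q psi) /\
  (forall phi psi, rdom S phi -> rdom S psi ->
     tform S phi psi = rC c * inner phi psi + inner (Q phi) (Q psi)).

Definition companion {H G} (S : lrel H H) (c : R) (Q : H -> G) : lrel G H :=
  fun u v => exists phi phi', S phi phi' /\ u = Q phi /\ v = phi' - rC c *: phi.

Definition krein_ext {H G} (S : lrel H H) (c : R) (Q : H -> G) : lrel H H :=
  rshift c (rprod (rclosure (companion S c Q)) (adjoint (companion S c Q))).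

(* Closure of the form t(T) of a semibounded relation T, given as its graph:
   form_closure T f g z  means f, g are in the domain of the closure of t(T)
   and its value at [f,g] is z: there are sequences u_n -> f, v_n -> g in
   dom T, which are t(T)-Cauchy, with t(T)[u_n, v_n] -> z. *)
Definition tconv {H} (T : lrel H H) (u : nat -> H) (f : H) : Prop :=
  (forall n, rdom T (u n)) /\
  (forall e : R, 0 < e -> exists N, forall n, (N <= n)%N -> hnorm (u n - f) < e) /\
  (forall e : R, 0 < e -> exists N, forall m n, (N <= m)%N -> (N <= n)%N ->
      `| tform T (u n - u m) (u n - u m) | < rC e).

Definition form_closure {H} (T : lrel H H) (f g : H) (z : R[i]) : Prop :=
  exists u v : nat -> H, tconv T u f /\ tconv T v g /\
    (forall e : R, 0 < e -> exists N, forall n, (N <= n)%N ->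
        `| tform T (u n) (v n) - z | < rC e).

Definition form_sub {H} (t1 t2 : H -> H -> R[i] -> Prop) : Prop :=
  forall f g z, t1 f g z -> t2 f g z.

End LinearRelations.

From Pilot Require Import Defs.
From mathcomp Require Import all_boot all_order all_algebra.
From mathcomp Require Import all_classical all_reals.
From mathcomp Require Import complex.
From mathcomp Require Import ring lra.
Import Order.TTheory GRing.Theory Num.Theory.
Local Open Scope ring_scope.
Set Implicit Arguments. Unset Strict Implicit. Unset Printing Implicit Defensive.

(* Write [beta f] for (t(H) - c)[f].  Part (a) is an algebraic identity: expand
   both sides with the symmetry of H, with t(S)[h] = c||h||^2 + ||Q_c h||^2, and
   with the defining relation of (J_c^* )_reg f in J_c^* f, tested against
   {Q_c h, h' - c h} in J_c.
   For (b), the functional l(h) = (h' - c h, f) on S satisfies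
   (Re l(h))^2 <= ||Q_c h||^2 beta f, since the quadratic r |-> beta (h - r f) is
   nonnegative.  Hence l is represented, l(h) = (Q_c h, g), by a vector g in the
   closure of ran Q_c with ||g||^2 <= beta f; g is the limit of Q_c h_n along a
   maximizing sequence of the concave functional 2 Re l - ||Q_c .||^2.  Then
   g is in J_c^* f and orthogonal to mul J_c^*, so g = (J_c^* )_reg f, and (a)
   turns ||g||^2 <= beta f into (b).
   For (c), t(S_{K,c})[x, w] = ((J_c^* )_reg x, (J_c^* )_reg w) + c (x, w); along
   sequences approximating f in t(S_{K,c}) the vectors (J_c^* )_reg u_n converge,
   by closedness of J_c^*, to (J_c^* )_reg f.  So t(H)[f] = ||(J_c^* )_reg f||^2
   + c||f||^2, the right-hand side of (a) vanishes, and (a) gives equality. *)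

Local Notation nc := Normc.normc.

Section ComplexFacts.
Variable R : realType.
Local Notation C := (R[i]).
Implicit Types (a b r : R) (x y z : C).

Lemma Re_rC r : complex.Re (rC r) = r. Proof. by []. Qed.
Lemma Im_rC r : complex.Im (rC r) = 0. Proof. by []. Qed.
Lemma ReD x y : complex.Re (x + y) = complex.Re x + complex.Re y.
Proof. exact: raddfD. Qed.
Lemma ReN x : complex.Re (- x) = - complex.Re x. Proof. exact: raddfN. Qed.
Lemma ReB x y : complex.Re (x - y) = complex.Re x - complex.Re y.
Proof. exact: raddfB. Qed.
Lemma ImB x y : complex.Im (x - y) = complex.Im x - complex.Im y.
Proof. exact: raddfB. Qed.
Lemma ReM_rC r x : complex.Re (rC r * x) = r * complex.Re x.
Proof. by case: x => a b /=; rewrite mul0r subr0. Qed.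
Lemma Re_conjc x : complex.Re (Num.conj x) = complex.Re x.
Proof. by case: x. Qed.

Lemma conjD x y : Num.conj (x + y) = Num.conj x + Num.conj y. Proof. exact: rmorphD. Qed.
Lemma conjB x y : Num.conj (x - y) = Num.conj x - Num.conj y. Proof. exact: rmorphB. Qed.
Lemma conjN x : Num.conj (- x) = - Num.conj x. Proof. exact: rmorphN. Qed.
Lemma conjM x y : Num.conj (x * y) = Num.conj x * Num.conj y. Proof. exact: rmorphM. Qed.
Lemma conj_rC r : Num.conj (rC r) = rC r. Proof. exact: conjc_real. Qed.
Lemma rCD a b : rC (a + b) = rC a + rC b. Proof. exact: rmorphD. Qed.
Lemma rCB a b : rC (a - b) = rC a - rC b. Proof. exact: rmorphB. Qed.
Lemma rCM a b : rC (a * b) = rC a * rC b. Proof. exact: rmorphM. Qed.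
Lemma rC_inj : injective (@rC R). Proof. by move=> a b []. Qed.
Lemma rC_Re z : complex.Im z = 0 -> z = rC (complex.Re z).
Proof. by case: z => a b /= ->. Qed.
Lemma lerC a b : (rC a <= rC b) = (a <= b). Proof. exact: lecR. Qed.
Lemma rC_le_ReIm a z : rC a <= z -> complex.Im z = 0 /\ a <= complex.Re z.
Proof. by rewrite lecE => /andP[/eqP]. Qed.

Lemma normc_ge0 z : 0 <= nc z.
Proof. by case: z => a b; apply: sqrtr_ge0. Qed.
Lemma normc_conj z : nc (Num.conj z) = nc z.
Proof. by case: z => a b; rewrite /= sqrrN. Qed.
Lemma normc_rC r : nc (rC r) = `|r|.
Proof. by rewrite /= expr0n /= addr0 sqrtr_sqr. Qed.
Lemma rC_normc_sqr z : rC (nc z ^+ 2) = Num.conj z * z.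
Proof.
case: z => a b; rewrite /rC /= sqr_sqrtr; last by rewrite addr_ge0 // sqr_ge0.
by congr (_ +i* _)%C; ring.
Qed.
Lemma Re_le_normc z : complex.Re z <= nc z.
Proof.
case: z => a b /=; apply: le_trans (ler_norm a) _.
by rewrite -sqrtr_sqr ler_wsqrtr // lerDl sqr_ge0.
Qed.
Lemma normc_lt z r : `|z| < rC r -> nc z < r.
Proof. by rewrite normc_def /rC ltcR; case: z. Qed.

Lemma eq0_Re_mul_le0 z : (forall a : C, complex.Re (a * z) <= 0) -> z = 0.
Proof.
move=> h; have := h (Num.conj z); rewrite -rC_normc_sqr Re_rC => hz.
by apply: Normc.eq0_normc; have := normc_ge0 z; nra.
Qed.

Lemma le_of_sqr_le a b : 0 <= b -> a ^+ 2 <= b ^+ 2 -> a <= b.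
Proof. by move=> hb h; nra. Qed.

Lemma lt_of_sqr_lt a b : 0 < b -> a ^+ 2 < b ^+ 2 -> a < b.
Proof. by move=> hb h; nra. Qed.

Lemma eq_of_sqr_eq a b : 0 <= a -> 0 <= b -> a ^+ 2 = b ^+ 2 -> a = b.
Proof. by move=> ha hb h; apply/eqP; rewrite eq_le; apply/andP; split; nra. Qed.

Lemma twice_le_add_of_sqr_le a b r : 0 <= a -> 0 <= b -> r ^+ 2 <= a * b -> 2 * r <= a + b.
Proof.
move=> ha hb h; apply: le_of_sqr_le; first exact: addr_ge0.
by have := sqr_ge0 (a - b); nra.
Qed.

Lemma sqr_le_mul_of_quadratic_ge0 a b c :
  0 <= a -> 0 <= c -> (forall r, 0 <= a - 2 * r * b + r ^+ 2 * c) -> b ^+ 2 <= a * c.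
Proof.
move=> ha hc h; have [c0|c_neq0] := eqVneq c 0.
  subst c; have [b0|b_neq0] := eqVneq b 0; first by rewrite b0; nra.
  have := h ((a + 1) / (2 * b)).
  have -> : a - 2 * ((a + 1) / (2 * b)) * b + ((a + 1) / (2 * b)) ^+ 2 * 0 = -1 by field.
  lra.
have c_gt0 : 0 < c by rewrite lt_def c_neq0 hc.
have := h (b / c).
have -> : a - 2 * (b / c) * b + (b / c) ^+ 2 * c = (a * c - b ^+ 2) / c by field.
by rewrite pmulr_lge0 ?invr_gt0 // subr_ge0.
Qed.

End ComplexFacts.

Section InnerProduct.
Variables (R : realType) (H : hilbert R).
Local Notation C := (R[i]).
Implicit Types x y z : H.

Lemma innerDl x y z : inner (x + y) z = inner x z + inner y z.
Proof. by have := hinner_linear 1 x y z; rewrite scale1r mul1r. Qed.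
Lemma inner0l z : inner (0 : H) z = 0.
Proof.
have h := innerDl 0 0 z; rewrite addr0 in h.
by apply: (@addrI _ (inner 0 z)); rewrite addr0 -h.
Qed.
Lemma innerZl (a : C) x z : inner (a *: x) z = a * inner x z.
Proof. by rewrite -[a *: x]addr0 /inner hinner_linear -/(inner 0 z) inner0l addr0. Qed.
Lemma innerNl x z : inner (- x) z = - inner x z.
Proof. by rewrite -scaleN1r innerZl mulN1r. Qed.
Lemma innerBl x y z : inner (x - y) z = inner x z - inner y z.
Proof. by rewrite innerDl innerNl. Qed.
Lemma innerC x y : inner y x = Num.conj (inner x y).
Proof. exact: hinner_conj. Qed.
Lemma innerDr x y z : inner z (x + y) = inner z x + inner z y.
Proof. by rewrite innerC innerDl conjD -!innerC. Qed.
Lemma innerZr (a : C) x z : inner z (a *: x) = Num.conj a * inner z x.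
Proof. by rewrite innerC innerZl conjM -innerC. Qed.
Lemma inner0r z : inner z (0 : H) = 0.
Proof. by rewrite innerC inner0l (conj_rC 0). Qed.
Lemma innerNr x z : inner z (- x) = - inner z x.
Proof. by rewrite innerC innerNl conjN -innerC. Qed.
Lemma innerBr x y z : inner z (x - y) = inner z x - inner z y.
Proof. by rewrite innerDr innerNr. Qed.
Lemma Re_innerC x y : complex.Re (inner y x) = complex.Re (inner x y).
Proof. by rewrite innerC Re_conjc. Qed.

Lemma hnorm_ge0 x : 0 <= hnorm x.
Proof. exact: sqrtr_ge0. Qed.
Lemma inner_self x : inner x x = rC (hnorm x ^+ 2).
Proof.
have [Im0 Re_ge0] := rC_le_ReIm (hinner_ge0 x : rC 0 <= _).
by rewrite sqr_sqrtr // {1}/inner (rC_Re Im0).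
Qed.
Lemma Re_inner_self x : complex.Re (inner x x) = hnorm x ^+ 2.
Proof. by rewrite inner_self. Qed.
Lemma hnorm0 : hnorm (0 : H) = 0.
Proof. by rewrite /hnorm -/(inner _ _) inner0l /= sqrtr0. Qed.
Lemma hnormZ (a : C) x : hnorm (a *: x) = nc a * hnorm x.
Proof.
apply: eq_of_sqr_eq; rewrite ?mulr_ge0 ?normc_ge0 ?hnorm_ge0 //.
apply: rC_inj; rewrite -inner_self innerZl innerZr exprMn rCM rC_normc_sqr -inner_self.
by rewrite mulrA [a * _]mulrC.
Qed.
Lemma hnormN x : hnorm (- x) = hnorm x.
Proof. by rewrite -scaleN1r hnormZ normcN -[1 : C]/(rC 1) normc_rC normr1 mul1r. Qed.
Lemma hnorm_distC x y : hnorm (x - y) = hnorm (y - x).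
Proof. by rewrite -hnormN opprB. Qed.

Lemma hnormD_sqr x y :
  hnorm (x + y) ^+ 2 = hnorm x ^+ 2 + hnorm y ^+ 2 + 2 * complex.Re (inner x y).
Proof. by rewrite -!Re_inner_self innerDl !innerDr !ReD (Re_innerC x y); ring. Qed.

Lemma Re_inner_le x y : complex.Re (inner x y) <= hnorm x * hnorm y.
Proof.
apply: le_of_sqr_le; first by rewrite mulr_ge0 ?hnorm_ge0.
rewrite exprMn; apply: sqr_le_mul_of_quadratic_ge0; rewrite ?sqr_ge0 // => r.
have := hnormD_sqr x (- (rC r *: y)).
rewrite hnormN hnormZ normc_rC innerNr innerZr conj_rC ReN ReM_rC.
rewrite exprMn real_normK ?num_real // => h.
by have := sqr_ge0 (hnorm (x - rC r *: y)); rewrite h; lra.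
Qed.

Lemma normc_inner_le x y : nc (inner x y) <= hnorm x * hnorm y.
Proof.
set z := inner x y.
have h := Re_inner_le (Num.conj z *: x) y.
rewrite innerZl -rC_normc_sqr Re_rC hnormZ normc_conj in h.
have := normc_ge0 z; rewrite le_eqVlt => /orP[/eqP <-|z_gt0].
  by rewrite mulr_ge0 ?hnorm_ge0.
by rewrite -(ler_pM2l z_gt0) mulrA -expr2.
Qed.

Lemma hnormD x y : hnorm (x + y) <= hnorm x + hnorm y.
Proof.
apply: le_of_sqr_le; first by rewrite addr_ge0 ?hnorm_ge0.
by rewrite hnormD_sqr; have := Re_inner_le x y; nra.
Qed.
Lemma hnormB x y : hnorm (x - y) <= hnorm x + hnorm y.
Proof. by rewrite -(hnormN y) hnormD. Qed.

End InnerProduct.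

Section Vanishing.
Variable R : realType.

(* Eventually below every positive bound; for nonnegative sequences this is
   convergence to 0. *)
Definition vanishing (x : nat -> R) :=
  forall e, 0 < e -> exists N, forall n, (N <= n)%N -> x n < e.

Lemma vanishing_inv_succ : vanishing (fun n => n.+1%:R^-1).
Proof.
move=> e e_gt0; have /archi_boundP : 0 <= e^-1 by rewrite invr_ge0 ltW.
set N := Num.Def.archi_bound _ => lt_N; exists N => n; rewrite -(ler_nat R) => le_Nn.
rewrite -[X in _ < X]invrK ltf_pV2 ?posrE ?invr_gt0 ?ltr0Sn // -addn1 natrD; lra.
Qed.

Lemma vanishingD (x y : nat -> R) :
  vanishing x -> vanishing y -> vanishing (fun n => x n + y n).
Proof.
move=> hx hy e e_gt0; have e2_gt0 : 0 < e / 2 by rewrite divr_gt0.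
have [N1 h1] := hx _ e2_gt0; have [N2 h2] := hy _ e2_gt0.
exists (maxn N1 N2) => n; rewrite geq_max => /andP[n1 n2].
by have := h1 n n1; have := h2 n n2; lra.
Qed.

Lemma vanishingZ (a : R) (x : nat -> R) : 0 <= a -> vanishing x -> vanishing (fun n => a * x n).
Proof.
move=> a_ge0 hx e e_gt0.
have [N h] := hx _ (divr_gt0 e_gt0 (ltr_pwDr ltr01 a_ge0)).
exists N => n /h; rewrite ltr_pdivlMr ?ltr_pwDr //; nra.
Qed.

Lemma vanishingM (x y : nat -> R) : (forall n, 0 <= x n) -> (forall n, 0 <= y n) ->
  vanishing x -> vanishing y -> vanishing (fun n => x n * y n).
Proof.
move=> x_ge0 y_ge0 hx hy e e_gt0.
have [N1 h1] := hx _ ltr01; have [N2 h2] := hy _ e_gt0.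
exists (maxn N1 N2) => n; rewrite geq_max => /andP[n1 n2].
by have := h1 n n1; have := h2 n n2; have := x_ge0 n; have := y_ge0 n; nra.
Qed.

Lemma vanishing_le (x y : nat -> R) : (forall n, y n <= x n) -> vanishing x -> vanishing y.
Proof.
move=> hle hx e e_gt0; have [N h] := hx _ e_gt0.
by exists N => n /h; apply: le_lt_trans.
Qed.

Lemma le0_vanishing (a : R) (x : nat -> R) : (forall n, a <= x n) -> vanishing x -> a <= 0.
Proof.
move=> hle hx; apply/ler_addgt0Pr => e e_gt0; rewrite add0r.
by have [N h] := hx _ e_gt0; exact: ltW (le_lt_trans (hle N) (h N (leqnn N))).
Qed.

End Vanishing.

Section LinearRelations.
Variable R : realType.
Local Notation C := (R[i]).
Variables H K : hilbert R.
Implicit Types T : lrel H K.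

Lemma linrel0 T : linrel T -> T 0 0.
Proof. by case. Qed.

Lemma linrelZ T (a : C) f f' : linrel T -> T f f' -> T (a *: f) (a *: f').
Proof. by case=> T00 lin hf; have := lin a _ _ _ _ hf T00; rewrite !addr0. Qed.

Lemma linrelD T f f' g g' : linrel T -> T f f' -> T g g' -> T (f + g) (f' + g').
Proof. by case=> _ lin hf hg; have := lin 1 _ _ _ _ hf hg; rewrite !scale1r. Qed.

Lemma linrelB T f f' g g' : linrel T -> T f f' -> T g g' -> T (f - g) (f' - g').
Proof.
by move=> linT hf hg; have := linrelD linT hf (linrelZ (-1) linT hg); rewrite !scaleN1r.
Qed.

Lemma adjoint_linrel T : linrel (adjoint T).
Proof.
split=> [f f' _|a g g1 h h1 hg hh f f' hT]; first by rewrite !inner0r.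
by rewrite innerDr innerZr innerDr innerZr (hg _ _ hT) (hh _ _ hT).
Qed.

Lemma opvalP T f : rdom T f -> T f (opval T f).
Proof. by move=> [g hg]; apply: (xgetPex 0); exists g. Qed.

Lemma rreg_opvalP T f : rdom T f -> rreg T f (opval (rreg T) f).
Proof. by move=> [g hg]; apply: (xgetPex 0); exists (g - oproj (rmul T) g); exists g. Qed.

Lemma rreg_opval T f : linrel T -> rdom T f -> T f (opval (rreg T) f).
Proof.
move=> linT /rreg_opvalP[g1 [hg1 ->]].
suff /(linrelB linT hg1) : T 0 (oproj (rmul T) g1) by rewrite subr0.
(* Where no orthogonal projection exists, [oproj] falls back to [0 \in mul T]. *)
rewrite /oproj; case: (boolp.pselect (exists y : K,
    rmul T y /\ forall m, rmul T m -> inner (g1 - y) m = 0)).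
  by move=> /(xgetPex 0) [].
move=> no_proj; rewrite xgetPN; first exact: linrel0.
by move=> y hy; apply: no_proj; exists y.
Qed.

Lemma rreg_opvalE T f g : linrel T -> T f g ->
  (forall m, T 0 m -> inner g m = 0) -> opval (rreg T) f = g.
Proof.
move=> linT hg g_orth.
have [g1 [hg1 ->]] := rreg_opvalP (ex_intro _ g hg).
pose P (y : K) := rmul T y /\ forall m, rmul T m -> inner (g1 - y) m = 0.
have Pg : P (g1 - g).
  split; first by have := linrelB linT hg1 hg; rewrite subrr.
  by move=> m hm; rewrite opprB addrC subrK; apply: g_orth.
have [Ty y_orth] : P (oproj (rmul T) g1) by apply: (xgetPex 0); exists (g1 - g).
set y := oproj _ g1 in Ty y_orth *.
have T0d : T 0 (g1 - y - g).
  by have := linrelB linT (linrelB linT hg1 hg) Ty; rewrite subrr subr0 addrAC.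
apply/eqP; rewrite -subr_eq0; apply/eqP; apply: hinner_eq0.
by rewrite -[hinner _ _]/(inner _ _) innerBl (y_orth _ T0d) (g_orth _ T0d) subrr.
Qed.

End LinearRelations.

Lemma rprod_linrel (R : realType) (H K L : hilbert R) (T : lrel H K) (U : lrel K L) :
  linrel T -> linrel U -> linrel (rprod U T).
Proof.
move=> linT linU; split; first by exists 0; split; apply: linrel0.
move=> a f f' g g' [k [Tf Uk]] [k' [Tg Uk']]; exists (a *: k + k'); split.
- by apply: linrelD linT (linrelZ a linT Tf) Tg.
- by apply: linrelD linU (linrelZ a linU Uk) Uk'.
Qed.

Lemma rshift_linrel (R : realType) (H : hilbert R) (c : R) (T : lrel H H) :
  linrel T -> linrel (Defs.rshift c T).
Proof.
move=> linT; split; first by exists 0; rewrite scaler0 addr0; split => //; apply: linrel0.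
move=> a f f' g g' [f0 [Tf ->]] [g0 [Tg ->]]; exists (a *: f0 + g0); split.
  exact: linrelD linT (linrelZ a linT Tf) Tg.
by rewrite scalerDr !scalerDr scalerA [a * _]mulrC -scalerA addrACA.
Qed.

Section Selfadjoint.
Variables (R : realType) (H : hilbert R) (A : lrel H H).
Hypotheses (linA : linrel A) (saA : selfadjoint A).

Lemma selfadjoint_sym x x' y y' : A x x' -> A y y' -> inner y' x = inner y x'.
Proof. by move=> /saA hx hy; apply: hx. Qed.

Lemma selfadjoint_inner_indep x x1 x2 y y' :
  A x x1 -> A x x2 -> A y y' -> inner x1 y = inner x2 y.
Proof.
move=> hx1 hx2 hy; have := selfadjoint_sym hy (linrelB linA hx1 hx2).
by rewrite subrr inner0l innerBl => /eqP; rewrite subr_eq0 => /eqP.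
Qed.

Lemma tform_subrel (S : lrel H H) x x' y y' :
  rsub S A -> S x x' -> A y y' -> tform S x y = inner x' y.
Proof.
move=> SA hx hy; apply: selfadjoint_inner_indep (SA _ _ hx) hy.
by apply: SA; apply: opvalP; exists x'.
Qed.

Lemma tform_selfadjoint x x' y y' : A x x' -> A y y' -> tform A x y = inner x' y.
Proof. exact: tform_subrel. Qed.

End Selfadjoint.

Section Limits.
Variable R : realType.
Local Notation C := (R[i]).

Lemma inner_vanishing (H : hilbert R) (x y : nat -> H) (a b : H) :
  vanishing (fun n => hnorm (x n - a)) -> vanishing (fun n => hnorm (y n - b)) ->
  vanishing (fun n => nc (inner (x n) (y n) - inner a b)).
Proof.
move=> hx hy; apply: (vanishing_le (x := fun n => hnorm b * hnorm (x n - a)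
  + hnorm (x n - a) * hnorm (y n - b) + hnorm a * hnorm (y n - b))); last first.
  apply: vanishingD; first apply: vanishingD.
  - exact: vanishingZ (hnorm_ge0 _) hx.
  - by apply: vanishingM => // n; apply: hnorm_ge0.
  - exact: vanishingZ (hnorm_ge0 _) hy.
move=> n.
have -> : inner (x n) (y n) - inner a b = inner (x n - a) (y n) + inner a (y n - b).
  by rewrite innerBl innerBr; ring.
apply: le_trans (le_normcD _ _) _.
have := normc_inner_le (x n - a) (y n); have := normc_inner_le a (y n - b).
have := hnormD b (y n - b); rewrite addrC subrK.
by have := hnorm_ge0 (x n - a); nra.
Qed.

Lemma vanishing_unique (a : nat -> C) (z w : C) :
  vanishing (fun n => nc (a n - z)) -> vanishing (fun n => nc (a n - w)) -> z = w.
Proof.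
move=> hz hw; apply/eqP; rewrite -subr_eq0; apply/eqP/Normc.eq0_normc.
apply/eqP; rewrite eq_le normc_ge0 andbT.
apply: le0_vanishing (vanishingD hz hw) => n.
by rewrite -(normcN (a n - z)); apply: le_trans (le_normcD _ _); rewrite opprB addrA subrK.
Qed.

Lemma orth_limit (H : hilbert R) (x : nat -> H) (p m : H) :
  (forall n, inner (x n) m = 0) -> vanishing (fun n => hnorm (x n - p)) -> inner p m = 0.
Proof.
move=> x_orth hx; apply: eq0_Re_mul_le0 => a; set m' := Num.conj a *: m.
have -> : a * inner p m = inner p m' by rewrite innerZr conjCK.
have x_orth' n : inner (x n) m' = 0 by rewrite innerZr x_orth mulr0.
apply: le0_vanishing (vanishingZ (hnorm_ge0 m') hx) => n.
have := innerBl p (x n) m'; rewrite x_orth' subr0 => <-.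
by rewrite mulrC hnorm_distC Re_inner_le.
Qed.

Lemma adjoint_limit (H K : hilbert R) (T : lrel H K) (y : nat -> K) (x : nat -> H) f p :
  (forall n, adjoint T (y n) (x n)) -> vanishing (fun n => hnorm (y n - f)) ->
  vanishing (fun n => hnorm (x n - p)) -> adjoint T f p.
Proof.
move=> hT hy hx a b hab; apply/eqP; rewrite -subr_eq0; apply/eqP.
apply: eq0_Re_mul_le0 => k.
apply: le0_vanishing (vanishingD (vanishingZ (hnorm_ge0 (k *: b)) hy)
                                 (vanishingZ (hnorm_ge0 (k *: a)) hx)) => n.
have -> : k * (inner b f - inner a p) = inner (k *: b) (f - y n) + inner (k *: a) (x n - p).
  by rewrite !innerZl !innerBr (hT n _ _ hab); ring.
rewrite ReD (hnorm_distC (y n)).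
by apply: lerD; apply: Re_inner_le.
Qed.

Lemma cauchy_of_vanishing (H : hilbert R) (u : nat -> H) f :
  vanishing (fun n => hnorm (u n - f)) ->
  forall e, 0 < e -> exists N, forall m n, (N <= m)%N -> (N <= n)%N -> hnorm (u m - u n) < e.
Proof.
move=> hu e e_gt0; have [N hN] : exists N, forall n, (N <= n)%N -> hnorm (u n - f) < e / 2.
  by apply: hu; rewrite divr_gt0.
exists N => m n /hN hm /hN hn.
have -> : u m - u n = (u m - f) - (u n - f) by rewrite opprB addrA subrK.
by apply: le_lt_trans (hnormB _ _) _; lra.
Qed.

Lemma form_closure_refl (H : hilbert R) (T : lrel H H) f :
  rdom T f -> form_closure T f f (tform T f f).
Proof.
have norm0_lt (e : R) : 0 < e -> `|0 : C| < rC e by rewrite normr0 /rC ltcR.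
move=> domf; have cst : tconv T (fun _ => f) f.
  split=> //; split=> e e_gt0; exists 0%N.
    by move=> n _; rewrite subrr hnorm0.
  by move=> m n _ _; rewrite subrr /tform inner0r norm0_lt.
exists (fun _ => f), (fun _ => f); do 2!split=> //.
by move=> e e_gt0; exists 0%N => n _; rewrite subrr norm0_lt.
Qed.

End Limits.

Section RieszOnRelation.
Variables (R : realType) (H K G : hilbert R) (T : lrel H K).
Variables (q : H -> G) (l : H -> K -> R[i]) (B : R).
Local Notation C := (R[i]).
Hypotheses (linT : linrel T) (B_ge0 : 0 <= B).
Hypothesis q_lin : forall (a : C) x y, rdom T x -> rdom T y -> q (a *: x + y) = a *: q x + q y.
Hypothesis l_lin : forall (a : C) x x' y y', T x x' -> T y y' ->
  l (a *: x + y) (a *: x' + y') = a * l x x' + l y y'.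
Hypothesis l_bound : forall x x', T x x' -> complex.Re (l x x') ^+ 2 <= hnorm (q x) ^+ 2 * B.

Let domT0 : rdom T 0. Proof. by exists 0; apply: linrel0. Qed.

Let qD x y : rdom T x -> rdom T y -> q (x + y) = q x + q y.
Proof. by move=> hx hy; have := q_lin 1 hx hy; rewrite !scale1r. Qed.

Let qZ (a : C) x : rdom T x -> q (a *: x) = a *: q x.
Proof.
have q0 : q 0 = 0.
  by apply: (@addrI _ (q 0)); rewrite -(qD domT0 domT0) !addr0.
by move=> hx; have := q_lin a hx domT0; rewrite !addr0 q0 addr0.
Qed.

Let lD x x' y y' : T x x' -> T y y' -> l (x + y) (x' + y') = l x x' + l y y'.
Proof. by move=> hx hy; have := l_lin 1 hx hy; rewrite !scale1r mul1r. Qed.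

Let lZ (a : C) x x' : T x x' -> l (a *: x) (a *: x') = a * l x x'.
Proof.
have T00 := linrel0 linT.
have l0 : l 0 0 = 0.
  by apply: (@addrI _ (l 0 0)); rewrite -(lD T00 T00) !addr0.
by move=> hx; have := l_lin a hx T00; rewrite !addr0 l0 addr0.
Qed.

(* [F] is concave; a maximizer [g] of its extension to the closure of [ran q]
   would satisfy [(q x, g) = l x], so we take the limit of a maximizing sequence. *)
Let F x x' := 2 * complex.Re (l x x') - hnorm (q x) ^+ 2.

Let F_le x x' : T x x' -> F x x' <= B.
Proof.
move=> hx; have := twice_le_add_of_sqr_le (sqr_ge0 (hnorm (q x))) B_ge0 (l_bound hx).
by rewrite /F; lra.
Qed.

Let values : set R := fun y => exists x x', T x x' /\ y = F x x'.
Let s := sup values.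

Let has_sup_values : has_sup values.
Proof.
split; first by exists (F 0 0); exists 0, 0; split => //; apply: linrel0.
by exists B => _ [x [x' [hx ->]]]; apply: F_le.
Qed.

Let F_le_sup x x' : T x x' -> F x x' <= s.
Proof. by move=> hx; apply: sup_upper_bound has_sup_values _ _; exists x, x'. Qed.

Let near_sup n : exists p : H * K, T p.1 p.2 /\ s - n.+1%:R^-1 < F p.1 p.2.
Proof.
have inv_gt0 : 0 < n.+1%:R^-1 :> R by rewrite invr_gt0 ltr0Sn.
have [_ [x [x' [hx ->]]] lt_F] := sup_adherent inv_gt0 has_sup_values.
by exists (x, x').
Qed.

Section MaximizingSequence.
Variables (x : nat -> H) (x' : nat -> K).
Hypotheses (Tx : forall n, T (x n) (x' n)) (Fx : forall n, s - n.+1%:R^-1 < F (x n) (x' n)).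

Let v n := q (x n).
Let domx n : rdom T (x n). Proof. by exists (x' n). Qed.

Let maximizing_parallelogram n m :
  hnorm (v n - v m) ^+ 2 <= 4 * s - 2 * F (x n) (x' n) - 2 * F (x m) (x' m).
Proof.
have TD := linrelD linT (Tx n) (Tx m).
have domD : rdom T (x n + x m) by exists (x' n + x' m).
have := F_le_sup (linrelZ (rC 2^-1) linT TD).
rewrite /F (lZ _ TD) (qZ _ domD) (qD (domx n) (domx m)) hnormZ normc_rC.
rewrite lD // ReM_rC ReD ger0_norm ?invr_ge0 ?ler0n // exprMn -/(v n) -/(v m).
have := hnormD_sqr (v n) (- v m); rewrite hnormN innerNr ReN.
by have := hnormD_sqr (v n) (v m); lra.
Qed.

Lemma maximizing_cauchy e : 0 < e ->
  exists N, forall m n, (N <= m)%N -> (N <= n)%N -> hnorm (v m - v n) < e.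
Proof.
move=> e_gt0; have e4_gt0 : 0 < e ^+ 2 / 4 by rewrite divr_gt0 // exprn_gt0.
have [N hN] := vanishing_inv_succ e4_gt0.
exists N => m n hm hn; apply: (lt_of_sqr_lt e_gt0).
have := maximizing_parallelogram m n; have := Fx m; have := Fx n.
have := hN m hm; have := hN n hn.
move: (F (x m) _) (F (x n) _) (m.+1%:R^-1) (n.+1%:R^-1) => Fm Fn dm dn; lra.
Qed.

Variable g : G.
Hypothesis v_to_g : vanishing (fun n => hnorm (v n - g)).

Let first_variation y y' r : T y y' -> 0 < r ->
  2 * r * complex.Re (l y y' - inner (q y) g) <= r ^+ 2 * hnorm (q y) ^+ 2.
Proof.
move=> hy r_gt0; rewrite -subr_le0.
set D := complex.Re _; set qy := hnorm (q y).
have domy : rdom T y by exists y'.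
apply: (le0_vanishing (x := fun n => n.+1%:R^-1 + (2 * r * qy) * hnorm (v n - g))); last first.
  apply: vanishingD; first exact: vanishing_inv_succ.
  by apply: vanishingZ v_to_g; rewrite !mulr_ge0 ?hnorm_ge0 ?ltW.
move=> n; have := F_le_sup (linrelD linT (linrelZ (rC r) linT hy) (Tx n)).
rewrite /F l_lin // (q_lin _ domy (domx n)) -/(v n) hnormD_sqr hnormZ normc_rC.
rewrite ger0_norm ?(ltW r_gt0) // innerZl ReD !ReM_rC.
have := ler_wpM2l (ltW r_gt0) (Re_inner_le (q y) (v n - g)).
rewrite innerBr ReB -/qy; have := Fx n; rewrite /D ReB /F -/(v n) exprMn.
move: s (n.+1%:R^-1) => s' d; lra.
Qed.

Lemma maximizing_limit_represents y y' : T y y' -> inner (q y) g = l y y'.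
Proof.
have Re_le0 z z' : T z z' -> complex.Re (l z z' - inner (q z) g) <= 0.
  move=> hz; set D := complex.Re _; set qz := hnorm (q z).
  rewrite leNgt; apply/negP => D_gt0.
  have den_gt0 : 0 < qz ^+ 2 + 1 by rewrite ltr_pwDr ?sqr_ge0.
  have := first_variation hz (divr_gt0 D_gt0 den_gt0); rewrite -/D -/qz.
  apply/negP; rewrite -ltNge -subr_gt0.
  have -> : 2 * (D / (qz ^+ 2 + 1)) * D - (D / (qz ^+ 2 + 1)) ^+ 2 * qz ^+ 2
          = D ^+ 2 * (qz ^+ 2 + 2) / (qz ^+ 2 + 1) ^+ 2 by field; rewrite gt_eqF.
  by rewrite divr_gt0 ?exprn_gt0 ?mulr_gt0 ?exprn_gt0 ?ltr_pwDr ?sqr_ge0.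
move=> hy; apply/eqP; rewrite eq_sym -subr_eq0; apply/eqP/eq0_Re_mul_le0 => a.
have domy : rdom T y by exists y'.
rewrite mulrBr -(lZ _ hy) -innerZl -(qZ _ domy).
by apply: Re_le0; apply: linrelZ.
Qed.

Lemma maximizing_limit_norm : hnorm g ^+ 2 <= B.
Proof.
set M := Num.sqrt B; have M_ge0 : 0 <= M by apply: sqrtr_ge0.
have MB : M ^+ 2 = B by rewrite sqr_sqrtr.
suff : hnorm g ^+ 2 - M * hnorm g <= 0.
  by rewrite -MB => h; apply: lerXn2r; rewrite ?nnegrE ?hnorm_ge0 //; nra.
apply: (le0_vanishing (x := fun n => (M + hnorm g) * hnorm (v n - g))); last first.
  by apply: vanishingZ v_to_g; rewrite addr_ge0 ?hnorm_ge0.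
move=> n; have l_le : complex.Re (l (x n) (x' n)) <= hnorm (v n) * M.
  by apply: le_of_sqr_le; rewrite ?mulr_ge0 ?hnorm_ge0 // exprMn MB l_bound.
have := Re_inner_le (g - v n) g; rewrite innerBl ReB Re_inner_self.
rewrite (maximizing_limit_represents (Tx n)) hnorm_distC.
have := hnormD g (v n - g); rewrite addrC subrK.
by have := hnorm_ge0 (v n - g); have := hnorm_ge0 g; nra.
Qed.

End MaximizingSequence.

Lemma riesz_on_relation : exists g : G,
  [/\ forall y y', T y y' -> inner (q y) g = l y y',
      forall m, (forall y, rdom T y -> inner (q y) m = 0) -> inner g m = 0
    & hnorm g ^+ 2 <= B].
Proof.
have [p hp] := boolp.choice near_sup.
have Tp n : T (p n).1 (p n).2 by case: (hp n).
have Fp n : s - n.+1%:R^-1 < F (p n).1 (p n).2 by case: (hp n).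
have [g g_lim] := hcomplete (maximizing_cauchy Tp Fp).
exists g; split.
- exact: maximizing_limit_represents Tp Fp g g_lim.
- by move=> m m_orth; apply: orth_limit g_lim => n; apply: m_orth; exists (p n).2.
- exact: maximizing_limit_norm Tp Fp g g_lim.
Qed.

End RieszOnRelation.

Section CompanionRelation.
Variables (R : realType) (Hs G : hilbert R) (S A : lrel Hs Hs) (c : R) (Q : Hs -> G).
Hypotheses (linS : linrel S) (linA : linrel A) (saA : selfadjoint A) (SA : rsub S A).
Hypotheses (A_ge_c : bounded_below_by A c) (repQ : representing_map S c Q).
Local Notation J := (companion S c Q).
Local Notation Jreg := (opval (rreg (adjoint J))).

Lemma adjoint_companionP x g :
  adjoint J x g <-> forall h h', S h h' -> inner (h' - rC c *: h) x = inner (Q h) g.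
Proof.
split=> [adj h h' hh|hJ u v [h [h' [hh [-> ->]]]]]; last exact: hJ.
by apply: adj; exists h, h'.
Qed.

Lemma mul_adjoint_companionP m :
  adjoint J 0 m <-> forall h, rdom S h -> inner (Q h) m = 0.
Proof.
rewrite adjoint_companionP; split=> [orth h [h' hh]|orth h h' hh].
  by rewrite -(orth h h' hh) inner0r.
by rewrite inner0r orth //; exists h'.
Qed.

Lemma representing_map_diag h h' : S h h' -> inner h' h = rC c * inner h h + inner (Q h) (Q h).
Proof.
move=> hh; have domh : rdom S h by exists h'.
by rewrite -(tform_subrel linA saA SA hh (SA hh)) repQ.2.
Qed.

Lemma tform_shift_diag f f' : A f f' ->
  tform_shift A c f f = rC (complex.Re (inner f' f - rC c * inner f f)) /\
  0 <= complex.Re (inner f' f - rC c * inner f f).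
Proof.
move=> hf; have [Im0 c_le] := rC_le_ReIm (A_ge_c hf).
rewrite /tform_shift (tform_selfadjoint linA saA hf hf).
rewrite inner_self -rCM -(rC_Re (z := _ - _)) ?ImB ?Im0 ?Im_rC ?subr0 //.
by rewrite ReB Re_rC subr_ge0.
Qed.

Lemma tform_shift_defect h h' f f' : S h h' -> A f f' -> rdom (adjoint J) f ->
  tform_shift A c (f - h) (f - h) - rC (hnorm (Jreg f - Q h) ^+ 2)
  = tform_shift A c f f - rC (hnorm (Jreg f) ^+ 2).
Proof.
move=> hh hf domf.
have /adjoint_companionP /(_ _ _ hh) Jf_h := rreg_opval (adjoint_linrel J) domf.
rewrite innerBl innerZl in Jf_h.
have sym := selfadjoint_sym saA hf (SA hh).
have Jf_Qh : inner (Jreg f) (Q h) = inner f' h - rC c * inner f h.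
  by rewrite innerC -Jf_h conjB conjM conj_rC -!innerC (selfadjoint_sym saA (SA hh) hf).
have hfh := linrelB linA hf (SA hh).
rewrite /tform_shift (tform_selfadjoint linA saA hfh hfh) (tform_selfadjoint linA saA hf hf).
rewrite -!inner_self.
rewrite !innerBl !innerBr Jf_Qh -Jf_h (representing_map_diag hh) sym.
by ring.
Qed.

Lemma companion_functional_bound f f' h h' : A f f' -> S h h' ->
  complex.Re (inner (h' - rC c *: h) f) ^+ 2
  <= hnorm (Q h) ^+ 2 * complex.Re (inner f' f - rC c * inner f f).
Proof.
move=> hf hh; have [_ beta_f] := tform_shift_diag hf.
apply: sqr_le_mul_of_quadratic_ge0; rewrite ?sqr_ge0 // => r.
have [_] := tform_shift_diag (linrelB linA (SA hh) (linrelZ (rC r) linA hf)).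
have -> : inner (h' - rC r *: f') (h - rC r *: f) - rC c * inner (h - rC r *: f) (h - rC r *: f)
   = rC (hnorm (Q h) ^+ 2) - rC r * (inner (h' - rC c *: h) f + Num.conj (inner (h' - rC c *: h) f))
     + rC (r ^+ 2) * (inner f' f - rC c * inner f f).
  rewrite -innerC ?(innerBl, innerBr, innerZl, innerZr, conj_rC).
  rewrite (selfadjoint_sym saA (SA hh) hf) (representing_map_diag hh) -inner_self rCM.
  by ring.
by rewrite !ReD ReN ReM_rC ReD Re_conjc !ReM_rC Re_rC; lra.
Qed.

Lemma adjoint_companion_Jreg_le f f' : A f f' ->
  rdom (adjoint J) f /\
  hnorm (Jreg f) ^+ 2 <= complex.Re (inner f' f - rC c * inner f f).
Proof.
move=> hf; have [_ beta_f] := tform_shift_diag hf.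
pose ell h h' := inner (h' - rC c *: h) f.
have ell_lin a x x' y y' : S x x' -> S y y' ->
    ell (a *: x + y) (a *: x' + y') = a * ell x x' + ell y y'.
  move=> _ _; rewrite /ell scalerDr scalerA [_ * a]mulrC -scalerA.
  by rewrite opprD addrACA -scalerBr innerDl innerZl.
have [g [represents orth norm_g]] := riesz_on_relation linS beta_f repQ.1 ell_lin
  (fun h h' => companion_functional_bound hf).
have Jf_g : adjoint J f g.
  by apply/adjoint_companionP => h h' hh; rewrite (represents _ _ hh).
rewrite (rreg_opvalE (adjoint_linrel J) Jf_g) => [|m /mul_adjoint_companionP].
  by split => //; exists g.
exact: orth.
Qed.

Lemma tform_shift_sub_ge f f' h h' : A f f' -> S h h' ->
  rC (hnorm (Jreg f - Q h) ^+ 2) <= tform_shift A c (f - h) (f - h).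
Proof.
move=> hf hh; have [domf norm_Jf] := adjoint_companion_Jreg_le hf.
have := tform_shift_defect hh hf domf; move/eqP; rewrite subr_eq => /eqP ->.
have [-> _] := tform_shift_diag hf.
by rewrite -rCB -rCD lerC; lra.
Qed.

Local Notation K := (krein_ext S c Q).

Lemma krein_ext_linrel : linrel K.
Proof. by apply/rshift_linrel/rprod_linrel; apply: adjoint_linrel. Qed.

Lemma krein_extP x y : K x y ->
  [/\ adjoint J x (Jreg x), forall m, adjoint J 0 m -> inner (Jreg x) m = 0
    & exists k, adjoint (adjoint J) (Jreg x) k /\ y = k + rC c *: x].
Proof.
move=> [k [[g [Jx_g J2g_k]] ->]].
have g_orth m : adjoint J 0 m -> inner g m = 0.
  by move=> Jm; rewrite innerC (J2g_k _ _ Jm) inner0l conj_rC.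
by rewrite (rreg_opvalE (adjoint_linrel J) Jx_g g_orth); split => //; exists k.
Qed.

Lemma krein_ext_dom x : rdom K x ->
  adjoint J x (Jreg x) /\ forall m, adjoint J 0 m -> inner (Jreg x) m = 0.
Proof. by move=> [y /krein_extP[]]. Qed.

Lemma JregB x y : rdom K x -> rdom K y -> Jreg (x - y) = Jreg x - Jreg y.
Proof.
move=> /krein_ext_dom[Jx x_orth] /krein_ext_dom[Jy y_orth].
apply: rreg_opvalE (adjoint_linrel J) (linrelB (adjoint_linrel J) Jx Jy) _.
by move=> m Jm; rewrite innerBl x_orth // y_orth // subrr.
Qed.

Lemma tform_krein_ext x w : rdom K x -> rdom K w ->
  tform K x w = inner (Jreg x) (Jreg w) + rC c * inner x w.
Proof.
move=> domx /krein_ext_dom[Jw _]; rewrite /tform.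
have [_ _ [k [J2k ->]]] := krein_extP (opvalP domx).
by rewrite innerDl innerZl innerC -(J2k _ _ Jw) -innerC.
Qed.

Lemma Jreg_sqr_le x : rdom K x ->
  hnorm (Jreg x) ^+ 2 <= nc (tform K x x) + `|c| * hnorm x ^+ 2.
Proof.
move=> domx; have := Re_le_normc (tform K x x).
rewrite tform_krein_ext // !inner_self -rCM -rCD Re_rC.
have : - c <= `|c| by rewrite -normrN ler_norm.
by have := sqr_ge0 (hnorm x); nra.
Qed.

Lemma Jreg_cauchy u f : tconv K u f ->
  forall e, 0 < e -> exists N, forall m n, (N <= m)%N -> (N <= n)%N ->
    hnorm (Jreg (u m) - Jreg (u n)) < e.
Proof.
move=> [domu [u_f u_cauchy]] e e_gt0.
have c1_gt0 : 0 < `|c| + 1 by rewrite ltr_pwDr.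
set d := e ^+ 2 / (2 * (`|c| + 1)).
have d_gt0 : 0 < d by rewrite divr_gt0 ?mulr_gt0 ?exprn_gt0.
have [N1 hN1] := u_cauchy _ (divr_gt0 (exprn_gt0 2 e_gt0) (ltr0Sn R 1)).
have sqrt_d_gt0 : 0 < Num.sqrt d by rewrite sqrtr_gt0.
have [N2 hN2] := cauchy_of_vanishing u_f sqrt_d_gt0.
exists (maxn N1 N2) => m n; rewrite !geq_max => /andP[m1 m2] /andP[n1 n2].
have domD := linrelB krein_ext_linrel (opvalP (domu m)) (opvalP (domu n)).
have := Jreg_sqr_le (ex_intro _ _ domD); rewrite JregB //.
have := normc_lt (hN1 _ _ n1 m1).
have sqr_lt_d : hnorm (u m - u n) ^+ 2 < d.
  by rewrite -ltr_sqrt // sqrtr_sqr ger0_norm ?hnorm_ge0 ?hN2.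
have : `|c| * hnorm (u m - u n) ^+ 2 <= `|c| * d by rewrite ler_wpM2l ?normr_ge0 ?ltW.
have -> : `|c| * d = e ^+ 2 / 2 - d by rewrite /d; field; rewrite gt_eqF.
move=> cX_le tK_lt JX_le; apply: (lt_of_sqr_lt e_gt0); clearbody d; lra.
Qed.

Lemma Jreg_limit u f : tconv K u f -> vanishing (fun n => hnorm (Jreg (u n) - Jreg f)).
Proof.
move=> uf; have [domu [u_f _]] := uf.
have [p Ju_p] := hcomplete (Jreg_cauchy uf).
suff -> : Jreg f = p by [].
apply: rreg_opvalE (adjoint_linrel J) _ _ => [|m Jm].
  apply: (adjoint_limit (x := fun n => Jreg (u n))) u_f Ju_p => n.
  by have [] := krein_ext_dom (domu n).
apply: (orth_limit (x := fun n => Jreg (u n))) Ju_p => n.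
by have [_ ->] := krein_ext_dom (domu n).
Qed.

Lemma tform_shift_sub_eq f f' h h' :
  form_sub (form_closure A) (form_closure K) -> A f f' -> S h h' ->
  tform_shift A c (f - h) (f - h) = rC (hnorm (Jreg f - Q h) ^+ 2).
Proof.
move=> AK hf hh; have [domf _] := adjoint_companion_Jreg_le hf.
have [u [v [uf [vf tK_to_tA]]]] := AK _ _ _ (form_closure_refl (ex_intro _ f' hf)).
have [[domu [u_f _]] [domv [v_f _]]] := (uf, vf).
have tA_f : tform A f f = inner (Jreg f) (Jreg f) + rC c * inner f f.
  apply: (vanishing_unique (a := fun n => tform K (u n) (v n))).
    by move=> e /tK_to_tA [N hN]; exists N => n /hN /normc_lt.
  apply: vanishing_le (vanishingD (inner_vanishing (Jreg_limit uf) (Jreg_limit vf))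
                                   (vanishingZ (normr_ge0 c) (inner_vanishing u_f v_f))) => n.
  rewrite tform_krein_ext // opprD addrACA -mulrBr.
  by apply: le_trans (le_normcD _ _) _; rewrite Normc.normcM normc_rC.
have := tform_shift_defect hh hf domf.
rewrite /tform_shift tA_f addrK (inner_self (Jreg f)) subrr => /eqP.
by rewrite subr_eq0 => /eqP.
Qed.

End CompanionRelation.

Theorem lemma7p3 (R : realType) (Hs G : hilbert R) (S A : lrel Hs Hs)
    (gamma c : R) (Q : Hs -> G) :
  linrel S -> semibounded S -> lower_bound S gamma -> c <= gamma ->
  representing_map S c Q ->
  linrel A -> selfadjoint A -> rsub S A -> semibounded A -> bounded_below_by A c ->
  let J := companion S c Q in
  let Jreg := opval (rreg (adjoint J)) in
  (forall h h' f f', S h h' -> A f f' -> rdom (adjoint J) f ->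
     tform_shift A c (f - h) (f - h) - rC (hnorm (Jreg f - Q h) ^+ 2)
     = tform_shift A c f f - rC (hnorm (Jreg f) ^+ 2)) /\
  (forall f f' h h', A f f' -> S h h' ->
     rdom (adjoint J) f /\
     rC (hnorm (Jreg f - Q h) ^+ 2) <= tform_shift A c (f - h) (f - h)) /\
  (form_sub (form_closure A) (form_closure (krein_ext S c Q)) ->
   forall f f' h h', A f f' -> S h h' ->
     tform_shift A c (f - h) (f - h) = rC (hnorm (Jreg f - Q h) ^+ 2)).
Proof.
move=> linS _ _ _ repQ linA saA SA _ A_ge_c J Jreg; split; last split.
- exact: tform_shift_defect linA saA SA repQ.
- move=> f f' h h' hf hh; split.
    exact: (adjoint_companion_Jreg_le linS linA saA SA A_ge_c repQ hf).1.
  by have := tform_shift_sub_ge linS linA saA SA A_ge_c repQ hf hh.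
- move=> AK f f' h h' hf hh.
  by have := tform_shift_sub_eq linS linA saA SA A_ge_c repQ AK hf hh.
Qed.
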